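(* Given an integer $l\ge0$, there exists a constant $c>0$ such that for all integers $n\le cN$ and all $k\ge1$, $$\int_{kT/2}^\infty dx\,(\psi_n(x))^2x^l=(\nu_1(N))^k,$$ where $T=\sqrt{2\pi N}$.
   Context: $\psi_n(x)=(2^nn!\sqrt\pi)^{-1/2}e^{-x^2/2}H_n(x)$ is the $n$-th Hermite function ($H_n$ the physicists' Hermite polynomial). $N\ge4$ is an integer (the dimension of the discrete system), and statements are asymptotic in $N$. $\nu_1(N)$ denotes a quantity that is $\exp(-\Omega(N))$, i.e., there is a constant $\beta>0$ such that it is at most $e^{-\beta N}$ for sufficiently large $N$. *)

From HB Require Import structures.
From mathcomp Require Import all_boot all_order all_algebra.
From mathcomp Require Import all_classical all_reals all_analysis.
Set Implicit Arguments. Unset Strict Implicit. Unset Printing Implicit Defensive.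
Import Order.TTheory GRing.Theory Num.Theory.
Local Open Scope ring_scope.

(* Physicists' Hermite polynomials via the standard recurrence
   H_0 = 1, H_1 = 2X, H_{n+2} = 2X H_{n+1} - 2(n+1) H_n.
   hermite_pair n = (H_n, H_{n+1}). *)
Fixpoint hermite_pair (R : nzRingType) (n : nat) : {poly R} * {poly R} :=
  match n with
  | 0%N => (1, 2%:R *: 'X)
  | m.+1 => let: (a, b) := hermite_pair R m in
            (b, 2%:R *: 'X * b - (2 * m.+1)%N%:R *: a)
  end.

Definition hermite (R : nzRingType) (n : nat) : {poly R} := (hermite_pair R n).1.

Definition hermite_fun (R : realType) (n : nat) (x : R) : R :=
  (Num.sqrt ((2 ^ n * n`!)%N%:R * Num.sqrt pi))^-1 * expR (- (x ^+ 2) / 2)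
  * (hermite R n).[x].

Definition Tper (R : realType) (N : nat) : R := Num.sqrt (2 * pi * N%:R).

From HB Require Import structures.
From mathcomp Require Import all_boot all_order all_algebra.
From mathcomp Require Import all_classical all_reals all_analysis.
From mathcomp Require Import lra ring measurable_realfun normal_distribution.
Set Implicit Arguments.
Unset Strict Implicit.
Unset Printing Implicit Defensive.
Import Order.TTheory GRing.Theory Num.Theory.
Local Open Scope ring_scope.
Local Open Scope classical_set_scope.

(* For x >= 3 sqrt(n) the Hermite polynomial is dominated by (3x)^n, so
   psi_n(x)^2 x^l <= l! 9^n e^(x - x^2/2).  Once x >= a >= 8 and n <= a^2/32
   this is at most l! e^(-a^2/8) e^(-x^2/8), a Gaussian tail whose total mass
   is sqrt(8 pi) e^(-a^2/8) up to the factor l!.  With a = kT/2 one has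
   a^2 = k^2 pi N / 2 >= kN, which gives the bound e^(-kN/16) for N large. *)

Lemma hermite0 (R : nzRingType) : hermite R 0 = 1.
Proof. by []. Qed.

Lemma hermite1 (R : nzRingType) : hermite R 1 = 2%:R *: 'X.
Proof. by []. Qed.

Lemma hermiteSS (R : nzRingType) (m : nat) :
  hermite R m.+2 = 2%:R *: 'X * hermite R m.+1 - (2 * m.+1)%N%:R *: hermite R m.
Proof. by rewrite /hermite /=; case: hermite_pair. Qed.

Lemma abs_hermite_le (R : realFieldType) (x : R) (m : nat) :
  0 <= x -> 2 * m.+1%:R <= 3 * x ^+ 2 ->
  `|(hermite R m).[x]| <= (3 * x) ^+ m /\
  `|(hermite R m.+1).[x]| <= (3 * x) ^+ m.+1.
Proof.
move=> x0; elim: m => [|m IH] hm.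
  by rewrite hermite0 hermite1 !hornerE normr1 ger0_norm; lra.
have [IHm IHm1] : `|(hermite R m).[x]| <= (3 * x) ^+ m /\
                  `|(hermite R m.+1).[x]| <= (3 * x) ^+ m.+1.
  by apply: IH; apply: le_trans hm; rewrite ler_wpM2l // ler_nat.
split=> //; rewrite hermiteSS !hornerE.
set P := (3 * x) ^+ m; have P0 : 0 <= P by rewrite exprn_ge0 //; lra.
have -> : (3 * x) ^+ m.+2 = 2 * x * (P * (3 * x)) + 3 * x ^+ 2 * P.
  by rewrite /P !exprS; ring.
rewrite exprSr -/P in IHm1.
(* |2x H_(m+1) - 2(m+1) H_m| <= 2x (3x)^(m+1) + 3x^2 (3x)^m, using 2(m+1) <= 3x^2 *)
apply: le_trans (ler_normB _ _) _.
rewrite !normrM !normr_nat (ger0_norm x0).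
apply: lerD; first by rewrite ler_wpM2l //; lra.
apply: ler_pM => //; rewrite natrM; apply: le_trans hm.
by rewrite ler_wpM2l // ler_nat.
Qed.

Lemma exprn_le_fact_expR (R : realType) (z : R) (n : nat) :
  0 <= z -> z ^+ n <= n`!%:R * expR z.
Proof.
move=> z0; case: n => [|m]; first by rewrite fact0 mul1r; have := expR_ge1Dx z; lra.
have f0 : 0 < (m.+1)`!%:R :> R by rewrite ltr0n fact_gt0.
rewrite mulrC -ler_pdivrMr //; have := expR_ge1Dxn m z0; lra.
Qed.

Lemma exprn9_le_expR (R : realType) (n : nat) : 9 ^+ n <= expR (4 * n%:R) :> R.
Proof.
rewrite mulrC expRM_natl; apply: lerXn2r; rewrite ?nnegrE ?expR_ge0 //.
have e1 : 2 <= expR 1 :> R by have := @expR_ge1Dx R 1; lra.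
rewrite -[4]/(4%:R) -mulr_natl -(mulr1 4%:R) expRM_natl.
have : 2 ^+ 4 <= expR 1 ^+ 4 :> R by apply: lerXn2r; rewrite ?nnegrE ?expR_ge0.
by rewrite !exprS expr0; lra.
Qed.

Lemma hermite_fun_sqr (R : realType) (n : nat) (x : R) :
  hermite_fun n x ^+ 2 =
  expR (- x ^+ 2) * (hermite R n).[x] ^+ 2 / ((2 ^ n * n`!)%N%:R * Num.sqrt pi).
Proof.
rewrite /hermite_fun !exprMn exprVn sqr_sqrtr ?mulr_ge0 ?sqrtr_ge0 //.
rewrite -expRM_natl (_ : 2%:R * (- x ^+ 2 / 2) = - x ^+ 2); first by ring.
by rewrite mulrC divfK.
Qed.

Lemma hermite_fun_sqr_le (R : realType) (n : nat) (x : R) :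
  0 <= x -> 2 * n.+1%:R <= 3 * x ^+ 2 ->
  hermite_fun n x ^+ 2 <= 9 ^+ n * expR (- x ^+ 2 / 2).
Proof.
move=> x0 hn; set K := ((2 ^ n * n`!)%N%:R : R).
have K0 : 0 < K by rewrite ltr0n muln_gt0 expn_gt0 fact_gt0.
have sqrtpi1 : 1 <= Num.sqrt pi :> R.
  by rewrite -sqrtr1 ler_sqrt ?pi_ge0 //; have := @pi_ge2 R; lra.
have hermite2 : (hermite R n).[x] ^+ 2 <= 9 ^+ n * (x ^+ 2) ^+ n.
  have -> : 9 ^+ n * (x ^+ 2) ^+ n = ((3 * x) ^+ n) ^+ 2.
    by rewrite -exprMn -exprM mulnC exprM; congr (_ ^+ _); ring.
  rewrite -real_normK ?num_real //.
  apply: lerXn2r; rewrite ?nnegrE ?exprn_ge0 //; first lra.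
  by case: (abs_hermite_le x0 hn).
have powx : (x ^+ 2) ^+ n <= K * expR (x ^+ 2 / 2).
  have -> : (x ^+ 2) ^+ n = 2 ^+ n * (x ^+ 2 / 2) ^+ n.
    by rewrite -exprMn; congr (_ ^+ _); field.
  rewrite /K natrM natrX -mulrA ler_wpM2l ?exprn_ge0 //.
  by apply: exprn_le_fact_expR; apply: divr_ge0 => //; exact: sqr_ge0.
rewrite hermite_fun_sqr ler_pdivrMr ?mulr_gt0 //; last by lra.
apply: le_trans (_ : expR (- x ^+ 2) * (9 ^+ n * (K * expR (x ^+ 2 / 2))) <= _).
  rewrite ler_wpM2l ?expR_ge0 //; apply: le_trans hermite2 _.
  by rewrite ler_wpM2l ?exprn_ge0.
have -> : expR (- x ^+ 2) * (9 ^+ n * (K * expR (x ^+ 2 / 2))) =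
          9 ^+ n * expR (- x ^+ 2 / 2) * K.
  by rewrite (_ : - x ^+ 2 / 2 = - x ^+ 2 + x ^+ 2 / 2) ?expRD; [ring | field].
rewrite -/K ler_wpM2l ?mulr_ge0 ?exprn_ge0 ?expR_ge0 //.
by rewrite ler_peMr // ltW.
Qed.

Lemma normal_fun0_2 (R : realType) (x : R) :
  normal_fun 0 2 x = expR (- x ^+ 2 / 8).
Proof. by rewrite /normal_fun subr0 -mulr_natr; congr (expR (_ / _)); lra. Qed.

Lemma hermite_weight_le_normal_fun (R : realType) (n l : nat) (a x : R) :
  8 <= a -> a <= x -> 32 * n%:R <= a ^+ 2 ->
  hermite_fun n x ^+ 2 * x ^+ l <= l`!%:R * expR (- a ^+ 2 / 8) * normal_fun 0 2 x.
Proof.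
move=> a8 ax an; have x0 : 0 <= x by lra.
have xa2 : a ^+ 2 <= x ^+ 2 by rewrite lerXn2r ?nnegrE //; lra.
have n0 : 0 <= n%:R :> R by [].
have hn : 2 * n.+1%:R <= 3 * x ^+ 2 by rewrite -addn1 natrD; nra.
apply: le_trans (_ : 9 ^+ n * expR (- x ^+ 2 / 2) * (l`!%:R * expR x) <= _).
  by rewrite ler_pM ?sqr_ge0 ?exprn_ge0 ?hermite_fun_sqr_le ?exprn_le_fact_expR.
apply: le_trans (_ : expR (4 * n%:R) * expR (- x ^+ 2 / 2) * (l`!%:R * expR x) <= _).
  by rewrite !ler_wpM2r ?mulr_ge0 ?expR_ge0 ?exprn9_le_expR.
have -> : expR (4 * n%:R) * expR (- x ^+ 2 / 2) * (l`!%:R * expR x) =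
          l`!%:R * expR (4 * n%:R + - x ^+ 2 / 2 + x) by rewrite !expRD; ring.
rewrite normal_fun0_2 -mulrA -expRD ler_wpM2l // ler_expR; nra.
Qed.

Lemma integral_normal_fun (R : realType) (m s : R) : s != 0 ->
  (\int[@lebesgue_measure R]_x (normal_fun m s x)%:E = (normal_peak s)^-1%:E)%E.
Proof.
move=> s0; have p0 : 0 < normal_peak s by exact: normal_peak_gt0.
transitivity (\int[@lebesgue_measure R]_x ((normal_peak s)^-1 * normal_pdf m s x)%:E)%E.
  by apply: eq_integral => x _; rewrite /normal_pdf (negbTE s0) mulKf ?gt_eqF.
under eq_integral do rewrite EFinM.
rewrite ge0_integralZl ?integral_normal_pdf ?mule1 //.
- by apply/measurable_EFinP; exact: measurable_normal_pdf.
- by move=> x _; rewrite lee_fin normal_pdf_ge0.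
- by rewrite lee_fin invr_ge0 ltW.
Qed.

Lemma integral_itv_le_normal_fun (R : realType) (a C s : R) (f : R -> R) :
  s != 0 -> 0 <= C -> measurable_fun `[a, +oo[ f ->
  (forall x, a <= x -> 0 <= f x <= C * normal_fun 0 s x) ->
  (\int[@lebesgue_measure R]_(x in `[a, +oo[) (f x)%:E <= (C / normal_peak s)%:E)%E.
Proof.
move=> s0 C0 mf fle.
have mg : measurable_fun [set: R] (fun x => C * normal_fun 0 s x).
  by apply: measurable_funM => //; exact: measurable_normal_fun.
have g0 x : 0 <= C * normal_fun 0 s x by rewrite mulr_ge0 ?normal_fun_ge0.
apply: (@le_trans _ _ (\int[@lebesgue_measure R]_(x in `[a, +oo[)
                         (C * normal_fun 0 s x)%:E)%E).
  apply: ge0_le_integral => //.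
  - by move=> x; rewrite /= in_itv /= andbT lee_fin => /fle /andP[].
  - exact/measurable_EFinP.
  - by apply/measurable_EFinP; exact: measurable_funS mg.
  - by move=> x; rewrite /= in_itv /= andbT lee_fin => /fle /andP[].
apply: (@le_trans _ _ (\int[@lebesgue_measure R]_x (C * normal_fun 0 s x)%:E)%E).
  apply: ge0_subset_integral => //; first exact/measurable_EFinP.
  by move=> x _; rewrite lee_fin.
under eq_integral do rewrite EFinM.
rewrite ge0_integralZl ?lee_fin //.
- by rewrite integral_normal_fun // -EFinM.
- by apply/measurable_EFinP; exact: measurable_normal_fun.
- by move=> x _; rewrite lee_fin normal_fun_ge0.
Qed.

Lemma measurable_hermite_fun (R : realType) (n : nat) :
  measurable_fun [set: R] (hermite_fun n).
Proof.
apply: measurable_funM; last first.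
  exact: continuous_measurable_fun (@continuous_horner R (hermite R n)).
apply: measurable_funM => //; apply: measurableT_comp => //.
by apply: measurable_funM => //; apply: measurableT_comp => //; exact: measurable_funX.
Qed.

Lemma hermite_tail_integral_le (R : realType) (n l : nat) (a : R) :
  8 <= a -> 32 * n%:R <= a ^+ 2 ->
  (\int[@lebesgue_measure R]_(x in `[a, +oo[) (hermite_fun n x ^+ 2 * x ^+ l)%:E
   <= (6 * l`!%:R * expR (- a ^+ 2 / 8))%:E)%E.
Proof.
move=> a8 an; set C := l`!%:R * expR (- a ^+ 2 / 8).
have C0 : 0 <= C by rewrite mulr_ge0 ?expR_ge0.
have peak : (normal_peak 2)^-1 <= 6 :> R.
  rewrite /normal_peak invrK -(ger0_norm (_ : 0 <= 6 :> R)) // -sqrtr_sqr.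
  by rewrite ler_sqrt ?sqr_ge0 //; have := @pihalf_lt2 R; rewrite -mulr_natr; lra.
apply: le_trans (@integral_itv_le_normal_fun R a C 2
  (fun x => hermite_fun n x ^+ 2 * x ^+ l) _ C0 _ _) _.
- by rewrite pnatr_eq0.
- apply: measurable_funTS; apply: measurable_funM => //.
  by apply: measurable_funX; exact: measurable_hermite_fun.
- move=> x ax; apply/andP; split; last exact: hermite_weight_le_normal_fun.
  by rewrite mulr_ge0 ?sqr_ge0 // exprn_ge0 //; lra.
by rewrite lee_fin mulrC -mulrA ler_wpM2r.
Qed.

Lemma Tper_sqr (R : realType) (N : nat) : Tper R N ^+ 2 = 2 * pi * N%:R.
Proof. by rewrite /Tper sqr_sqrtr // !mulr_ge0 // pi_ge0. Qed.

Lemma fact_expR_le_expRX (R : realType) (l k : nat) (N a : R) :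
  (1 <= k)%N -> 96 * l`!%:R <= N -> k%:R * N <= a ^+ 2 ->
  6 * l`!%:R * expR (- a ^+ 2 / 8) <= expR (- (1 / 16 * N)) ^+ k.
Proof.
move=> k1 hN ha; have k1' : 1 <= k%:R :> R by rewrite ler1n.
have N0 : 0 <= N by apply: le_trans hN; rewrite mulr_ge0.
have eN : N / 16 <= expR (N / 16) by have := expR_ge1Dx (N / 16); lra.
have fact_le : 6 * l`!%:R <= expR (a ^+ 2 / 8 - k%:R * N / 16).
  have : expR (N / 16) <= expR (a ^+ 2 / 8 - k%:R * N / 16) by rewrite ler_expR; nra.
  lra.
rewrite -expRM_natl (_ : k%:R * _ = a ^+ 2 / 8 - k%:R * N / 16 + - a ^+ 2 / 8).
  by rewrite expRD ler_wpM2r ?expR_ge0.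
by field.
Qed.

Theorem lemma1 (R : realType) (l : nat) :
  exists c : R, 0 < c /\
  exists beta : R, 0 < beta /\
  exists N0 : nat, forall N : nat, (4 <= N)%N -> (N0 <= N)%N ->
  forall n : nat, n%:R <= c * N%:R ->
  forall k : nat, (1 <= k)%N ->
  (\int[@lebesgue_measure R]_(x in `[(k%:R * Tper R N / 2)%R, +oo[)
      ((hermite_fun n x) ^+ 2 * x ^+ l)%:E
   <= ((expR (- (beta * N%:R))) ^+ k)%:E)%E.
Proof.
exists (1 / 32); split; first lra.
exists (1 / 16); split; first lra.
exists (96 * l`! + 64)%N => N _ + n hn k k1.
rewrite -(ler_nat R) natrD natrM => hN.
have k1' : 1 <= k%:R :> R by rewrite ler1n.
set a := k%:R * Tper R N / 2.
have a0 : 0 <= a by rewrite /a !mulr_ge0 ?sqrtr_ge0.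
have kN : k%:R * N%:R <= a ^+ 2.
  have -> : a ^+ 2 = k%:R ^+ 2 * N%:R * (pi / 2) by rewrite /a !exprMn Tper_sqr; field.
  apply: le_trans (_ : k%:R ^+ 2 * N%:R <= _); first by rewrite ler_wpM2r //; nra.
  by rewrite ler_peMr ?mulr_ge0 ?sqr_ge0 ?pihalf_ge1.
have l0 : 0 <= l`!%:R :> R by [].
have a8 : 8 <= a by nra.
have an : 32 * n%:R <= a ^+ 2 by nra.
apply: le_trans (hermite_tail_integral_le l a8 an) _.
by rewrite lee_fin fact_expR_le_expRX //; lra.
Qed.
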